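(* For every non-empty context $\Gamma$, every formula $A$ and every non-empty context $\Theta$: (i) $\varphi(\Gamma)\le A$ in the Tamari order if and only if $\Gamma\le A$ (with $A$ viewed as a one-element context) in the substitution order; and (ii) $\psi(A)\le\Theta$ in the substitution order if and only if $A\le\varphi(\Theta)$ in the Tamari order. That is, $\psi\dashv\varphi\dashv i$ form an adjoint triple between the poset of formulas and the poset of non-empty contexts, where $i$ sends $A$ to the one-element context $A$.
   Context: Formulas are built from atoms ($p,q,\dots$) by a binary product: every formula is an atom or $A\bullet B$. A context is a finite (possibly empty) list of formulas; commas denote concatenation. The sequent calculus has exactly four rules (no weakening, contraction or exchange): ($\bullet L$) from $A,B,\Delta\vdash C$ infer $A\bullet B,\Delta\vdash C$ (the product must be leftmost); ($\bullet R$) from $\Gamma\vdash A$ and $\Delta\vdash B$ infer $\Gamma,\Delta\vdash A\bullet B$; ($id$) $A\vdash A$; ($cut$) from $\Theta\vdash A$ and $\Gamma,A,\Delta\vdash B$ infer $\Gamma,\Theta,\Delta\vdash B$; derivable means conclusion of a finite derivation tree with no undischarged premises. The Tamari order $\le$ on formulas is the least preorder with $(A\bullet B)\bullet C\le A\bullet(B\bullet C)$ and $A_1\le A_2$, $B_1\le B_2$ implying $A_1\bullet B_1\le A_2\bullet B_2$. The substitution order on contexts is the least relation $\le$ such that: (1) if $\Gamma\vdash A$ is derivable then $\Gamma\le A$ (one-element context); (2) $\cdot\le\cdot$ for the empty context; (3) if $\Gamma_1\le\Gamma_2$ and $\Theta_1\le\Theta_2$ then $(\Gamma_1,\Theta_1)\le(\Gamma_2,\Theta_2)$.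 $\varphi$ is the left-associated product of a non-empty context: $\varphi(A)=A$, $\varphi(\Gamma,A)=\varphi(\Gamma)\bullet A$. $\psi$ is defined by $\psi(p)=p$ for atoms and $\psi(A\bullet B)=\psi(A),B$. *)

From Stdlib Require Import List.
Import ListNotations.

Inductive formula : Type :=
| Atom : nat -> formula
| Prod : formula -> formula -> formula.

Definition context := list formula.

Inductive derivable : context -> formula -> Prop :=
| d_prodL : forall A B D C,
    derivable (A :: B :: D) C -> derivable (Prod A B :: D) C
| d_prodR : forall G D A B,
    derivable G A -> derivable D B -> derivable (G ++ D) (Prod A B)
| d_id : forall A, derivable [A] A
| d_cut : forall Th G D A B,
    derivable Th A -> derivable (G ++ A :: D) B -> derivable (G ++ Th ++ D) B.

Inductive tamari : formula -> formula -> Prop :=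
| t_refl : forall A, tamari A A
| t_trans : forall A B C, tamari A B -> tamari B C -> tamari A C
| t_assoc : forall A B C, tamari (Prod (Prod A B) C) (Prod A (Prod B C))
| t_mono : forall A1 A2 B1 B2,
    tamari A1 A2 -> tamari B1 B2 -> tamari (Prod A1 B1) (Prod A2 B2).

Inductive subst_le : context -> context -> Prop :=
| s_der : forall G A, derivable G A -> subst_le G [A]
| s_nil : subst_le [] []
| s_cat : forall G1 G2 T1 T2,
    subst_le G1 G2 -> subst_le T1 T2 -> subst_le (G1 ++ T1) (G2 ++ T2).

(* The value on the empty context is a junk value (never used: phi is
   only applied to non-empty contexts). *)
Definition phi (G : context) : formula :=
  match G with
  | [] => Atom 0
  | A :: G' => fold_left Prod G' A
  end.

Fixpoint psi (A : formula) : context :=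
  match A with
  | Atom p => [Atom p]
  | Prod A B => psi A ++ [B]
  end.

From Stdlib Require Import List.
Import ListNotations.

(* Γ ⊢ A holds exactly when φ(Γ) ≤ A: soundness is by induction on derivations, the key
   inequality being φ(Γ,Δ) ≤ φ(Γ)•φ(Δ); completeness because Γ ⊢ φ(Γ) and every Tamari
   inequality A ≤ B is derivable as A ⊢ B.  A substitution Γ ≤ Δ lets one replace Δ by Γ
   inside any derivable sequent (by cut); this gives (i), and the forward half of (ii)
   through φ(ψ(A)) = A.  For the backward half, ψ is monotone from the Tamari order to the
   substitution order, and ψ(φ(Θ)) ≤ Θ because ψ(C) ⊢ C. *)

Lemma fold_left_Prod_mono (D : context) (X X' : formula) :
  tamari X X' -> tamari (fold_left Prod D X) (fold_left Prod D X').
Proof.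
  revert X X'; induction D as [|C D IH]; intros X X' HX; simpl.
  - exact HX.
  - apply IH, t_mono; [exact HX | apply t_refl].
Qed.

Lemma fold_left_Prod_assoc (D : context) (X Y : formula) :
  tamari (fold_left Prod D (Prod X Y)) (Prod X (fold_left Prod D Y)).
Proof.
  revert Y; induction D as [|C D IH]; intros Y; simpl.
  - apply t_refl.
  - eapply t_trans; [apply fold_left_Prod_mono, t_assoc | apply IH].
Qed.

Lemma phi_app (G D : context) : G <> [] -> phi (G ++ D) = fold_left Prod D (phi G).
Proof.
  destruct G as [|Y G]; intros HG; [congruence|].
  simpl; apply fold_left_app.
Qed.

Lemma phi_snoc (G : context) (B : formula) :
  G <> [] -> phi (G ++ [B]) = Prod (phi G) B.
Proof. intros HG; rewrite phi_app by exact HG; reflexivity. Qed.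

Lemma phi_app_le (G D : context) :
  G <> [] -> D <> [] -> tamari (phi (G ++ D)) (Prod (phi G) (phi D)).
Proof.
  intros HG HD; destruct D as [|C D]; [congruence|].
  rewrite phi_app by exact HG; simpl.
  apply fold_left_Prod_assoc.
Qed.

Lemma app_neq_nil_l {T : Type} (l l' : list T) : l <> [] -> l ++ l' <> [].
Proof. intros Hl E; apply app_eq_nil in E; tauto. Qed.

Lemma app_neq_nil_r {T : Type} (l l' : list T) : l' <> [] -> l ++ l' <> [].
Proof. intros Hl' E; apply app_eq_nil in E; tauto. Qed.

Lemma phi_snoc_replace_le (P Th : context) (X : formula) :
  Th <> [] -> tamari (phi Th) X -> tamari (phi (P ++ Th)) (phi (P ++ [X])).
Proof.
  intros HTh HX; destruct P as [|Y P]; [exact HX|].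
  eapply t_trans; [apply phi_app_le; [discriminate | exact HTh]|].
  rewrite phi_snoc by discriminate.
  apply t_mono; [apply t_refl | exact HX].
Qed.

Lemma phi_replace_le (P Th S : context) (X : formula) :
  Th <> [] -> tamari (phi Th) X -> tamari (phi (P ++ Th ++ S)) (phi (P ++ X :: S)).
Proof.
  intros HTh HX.
  change (X :: S) with ([X] ++ S).
  rewrite !app_assoc.
  rewrite (phi_app (P ++ Th)), (phi_app (P ++ [X])) by (apply app_neq_nil_r; easy).
  apply fold_left_Prod_mono, phi_snoc_replace_le; assumption.
Qed.

Lemma derivable_nonempty (G : context) (A : formula) : derivable G A -> G <> [].
Proof.
  induction 1 as [| G D A B _ IHG _ _ | | Th G D A B _ IHTh _ _]; try discriminate.
  - apply app_neq_nil_l, IHG.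
  - apply app_neq_nil_r, app_neq_nil_l, IHTh.
Qed.

Lemma derivable_tamari (G : context) (A : formula) :
  derivable G A -> tamari (phi G) A.
Proof.
  induction 1 as [A B D C _ IH | G D A B HGA IHG HDB IHD | A
                 | Th G D A B HTh IHTh _ IH].
  - exact IH.
  - eapply t_trans; [apply phi_app_le; eapply derivable_nonempty; eassumption|].
    apply t_mono; assumption.
  - apply t_refl.
  - eapply t_trans; [|exact IH].
    apply phi_replace_le; [eapply derivable_nonempty; eassumption | exact IHTh].
Qed.

Lemma derivable_phi (G : context) : G <> [] -> derivable G (phi G).
Proof.
  induction G as [|B G IH] using rev_ind; intros HG; [congruence|].
  destruct G as [|Y G]; [apply d_id|].
  rewrite phi_snoc by discriminate.
  apply d_prodR; [apply IH; discriminate | apply d_id].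
Qed.

Lemma derivable_cut1 (Th : context) (A B : formula) :
  derivable Th A -> derivable [A] B -> derivable Th B.
Proof.
  intros HThA HAB.
  pose proof (d_cut Th [] [] A B HThA HAB) as HThB.
  rewrite app_nil_r in HThB; exact HThB.
Qed.

Lemma tamari_derivable (A B : formula) : tamari A B -> derivable [A] B.
Proof.
  induction 1 as [A | A B C _ IHAB _ IHBC | A B C | A1 A2 B1 B2 _ IHA _ IHB].
  - apply d_id.
  - exact (derivable_cut1 [A] B C IHAB IHBC).
  - apply (d_prodL (Prod A B) C []), (d_prodL A B [C]).
    apply (d_prodR [A] [B; C]); [apply d_id|].
    apply (d_prodR [B] [C]); apply d_id.
  - apply (d_prodL A1 B1 []), (d_prodR [A1] [B1]); assumption.
Qed.

Lemma derivable_iff_tamari_phi (G : context) (A : formula) :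
  G <> [] -> derivable G A <-> tamari (phi G) A.
Proof.
  intros HG; split; [apply derivable_tamari|].
  intros H; exact (derivable_cut1 G (phi G) A (derivable_phi G HG) (tamari_derivable _ _ H)).
Qed.

Lemma subst_le_derivable_in (G D : context) :
  subst_le G D ->
  forall (P S : context) (E : formula),
    derivable (P ++ D ++ S) E -> derivable (P ++ G ++ S) E.
Proof.
  induction 1 as [G A HGA | | G1 G2 T1 T2 _ IHG _ IHT]; intros P S E H.
  - exact (d_cut G P S A E HGA H).
  - exact H.
  - rewrite <- app_assoc.
    apply IHG.
    rewrite app_assoc; apply IHT.
    rewrite <- !app_assoc in *; exact H.
Qed.

Lemma subst_le_derivable (G D : context) (E : formula) :
  subst_le G D -> derivable D E -> derivable G E.
Proof.
  intros HGD HDE.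
  pose proof (subst_le_derivable_in G D HGD [] [] E) as HGE.
  rewrite !app_nil_r in HGE; exact (HGE HDE).
Qed.

Lemma subst_le_single (G : context) (A : formula) :
  subst_le G [A] <-> derivable G A.
Proof.
  split; [|apply s_der].
  intros H; exact (subst_le_derivable G [A] A H (d_id A)).
Qed.

Lemma subst_le_refl (D : context) : subst_le D D.
Proof.
  induction D as [|C D IH]; [apply s_nil|].
  apply (s_cat [C] [C] D D); [apply s_der, d_id | exact IH].
Qed.

Lemma subst_le_app_inv (G D1 D2 : context) :
  subst_le G (D1 ++ D2) ->
  exists G1 G2, G = G1 ++ G2 /\ subst_le G1 D1 /\ subst_le G2 D2.
Proof.
  intros H; remember (D1 ++ D2) as D eqn:ED; revert D1 D2 ED.
  induction H as [G A HGA | | G1 G2 T1 T2 HG IHG HT IHT]; intros D1 D2 ED.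
  - symmetry in ED; apply app_eq_unit in ED as [[-> ->] | [-> ->]].
    + exists [], G; repeat split; [apply s_nil | apply s_der, HGA].
    + exists G, []; rewrite app_nil_r; repeat split; [apply s_der, HGA | apply s_nil].
  - symmetry in ED; apply app_eq_nil in ED as [-> ->].
    exists [], []; repeat split; apply s_nil.
  - apply app_eq_app in ED as [L [[-> ->] | [-> ->]]].
    + destruct (IHG D1 L eq_refl) as (K1 & K2 & -> & HK1 & HK2).
      exists K1, (K2 ++ T1); rewrite app_assoc; repeat split;
        [exact HK1 | apply s_cat; assumption].
    + destruct (IHT L D2 eq_refl) as (K1 & K2 & -> & HK1 & HK2).
      exists (G1 ++ K1), K2; rewrite app_assoc; repeat split;
        [apply s_cat; assumption | exact HK2].
Qed.

Lemma subst_le_trans (G D E : context) :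
  subst_le G D -> subst_le D E -> subst_le G E.
Proof.
  intros HGD HDE; revert G HGD.
  induction HDE as [D A HDA | | D1 E1 D2 E2 _ IH1 _ IH2]; intros G HGD.
  - exact (s_der G A (subst_le_derivable G D A HGD HDA)).
  - exact HGD.
  - destruct (subst_le_app_inv G D1 D2 HGD) as (G1 & G2 & -> & HG1 & HG2).
    apply s_cat; [apply IH1 | apply IH2]; assumption.
Qed.

Lemma psi_nonempty (A : formula) : psi A <> [].
Proof.
  destruct A; simpl; [discriminate | apply app_neq_nil_r; discriminate].
Qed.

Lemma phi_psi (A : formula) : phi (psi A) = A.
Proof.
  induction A as [p | A IHA B _]; [reflexivity|]; simpl.
  rewrite phi_snoc by apply psi_nonempty.
  rewrite IHA; reflexivity.
Qed.

Lemma psi_fold_left (D : context) (C : formula) :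
  psi (fold_left Prod D C) = psi C ++ D.
Proof.
  revert C; induction D as [|B D IH]; intros C; simpl.
  - rewrite app_nil_r; reflexivity.
  - rewrite IH; simpl; rewrite <- app_assoc; reflexivity.
Qed.

Lemma psi_derivable (A : formula) : derivable (psi A) A.
Proof.
  induction A as [p | A IHA B _]; simpl; [apply d_id|].
  apply d_prodR; [exact IHA | apply d_id].
Qed.

Lemma psi_mono (A B : formula) : tamari A B -> subst_le (psi A) (psi B).
Proof.
  induction 1 as [A | A B C _ IHAB _ IHBC | A B C | A1 A2 B1 B2 _ IHA HB _]; simpl.
  - apply subst_le_refl.
  - eapply subst_le_trans; eassumption.
  - rewrite <- app_assoc.
    apply s_cat; [apply subst_le_refl|].
    apply s_der, (d_prodR [B] [C]); apply d_id.
  - apply s_cat; [exact IHA|].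
    apply s_der, tamari_derivable, HB.
Qed.

Lemma psi_phi_le (Th : context) : Th <> [] -> subst_le (psi (phi Th)) Th.
Proof.
  destruct Th as [|C Th]; intros HTh; [congruence|]; simpl.
  rewrite psi_fold_left.
  apply (s_cat (psi C) [C] Th Th); [apply s_der, psi_derivable | apply subst_le_refl].
Qed.

Theorem proposition2p7 :
  forall (G : context) (A : formula) (Th : context),
    G <> [] -> Th <> [] ->
    (tamari (phi G) A <-> subst_le G [A]) /\
    (subst_le (psi A) Th <-> tamari A (phi Th)).
Proof.
  intros G A Th HG HTh; split.
  - rewrite subst_le_single; symmetry; apply derivable_iff_tamari_phi, HG.
  - split; intros H.
    + rewrite <- (phi_psi A).
      apply derivable_tamari, (subst_le_derivable (psi A) Th); [exact H|].
      apply derivable_phi, HTh.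
    + eapply subst_le_trans; [apply psi_mono, H | apply psi_phi_le, HTh].
Qed.
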